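(* Let $H$ be a real Hilbert space, $a\in H$, $r>0$, and let $\{C_\alpha\}_{\alpha\in\Omega}$ ($|\Omega|\ge2$) be a family of closed convex subsets of $H$ each containing the closed ball $B(a,r)$. Let $C=\bigcap_\alpha C_\alpha$. (a) For every starting element $x_0\in H$ and every sequence $\{t_n\}\subset[0,1]$, every sequence $\{x_n\}$ of remote projections onto $\{C_\alpha\}$ with weakness parameters $\{t_n\}$ converges in norm. (b) If moreover $\sum_n t_n^2=\infty$, then the limit $w$ of $\{x_n\}$ belongs to $C$ and for every $n$, $$|x_n-w|\le 2|x_0-a|\prod_{k=0}^{n-1}\Bigl(1-\frac{t_k^2r^2}{|x_0-a|^2}\Bigr)^{1/2}.$$
   Context: $P_\alpha$ is the metric projection onto $C_\alpha$. A sequence of remote projections with weakness parameters $t_n\in[0,1]$ starting at $x_0$: $x_{n+1}=P_{\alpha(n)}x_n$, where $\alpha(n)\in\Omega$ is any index with $\mathrm{dist}(x_n,C_{\alpha(n)})\ge t_n\sup_\alpha\mathrm{dist}(x_n,C_\alpha)$; if $t_n=1$ for some $n$ it is required that $\max_\alpha\mathrm{dist}(x,C_\alpha)$ is attained for every $x\in H$. *)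

From HB Require Import structures.
From mathcomp Require Import all_boot all_order all_algebra.
From mathcomp Require Import all_classical all_reals all_analysis.
Set Implicit Arguments. Unset Strict Implicit. Unset Printing Implicit Defensive.
Import Order.TTheory GRing.Theory Num.Theory.
Import numFieldNormedType.Exports.
Local Open Scope classical_set_scope.
Local Open Scope ring_scope.

(* A real Hilbert space is a complete normed space whose norm is induced by
   an inner product: ip is symmetric, linear in its first argument, and
   `|x|^2 = ip x x. *)
Definition is_inner_product {R : realType} {H : normedModType R}
  (ip : H -> H -> R) : Prop :=
  (forall x y, ip x y = ip y x) /\
  (forall x y z, ip (x + y) z = ip x z + ip y z) /\
  (forall (c : R) x y, ip (c *: x) y = c * ip x y) /\
  (forall x, `|x| ^+ 2 = ip x x).

Definition dist_set {R : realType} {H : normedModType R} (x : H) (A : set H) : R :=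
  inf [set `|x - y| | y in A].

Definition is_metric_proj {R : realType} {H : normedModType R}
  (A : set H) (x p : H) : Prop :=
  A p /\ forall y, A y -> `|x - p| <= `|x - y|.

Definition cball {R : realType} {H : normedModType R} (a : H) (r : R) : set H :=
  [set y | `|y - a| <= r].

Definition remote_proj_seq {R : realType} {H : normedModType R} {Omega : Type}
  (C : Omega -> set H) (t : nat -> R) (x0 : H) (x : nat -> H) : Prop :=
  x 0%N = x0 /\
  forall n, exists i : Omega,
    t n * sup [set dist_set (x n) (C j) | j in [set: Omega]]
      <= dist_set (x n) (C i)
    /\ is_metric_proj (C i) (x n) (x n.+1).

From HB Require Import structures.
From mathcomp Require Import all_boot all_order all_algebra.
From mathcomp Require Import all_classical all_reals all_analysis.
From mathcomp Require Import ring lra.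
Import Order.TTheory GRing.Theory Num.Theory.
Import numFieldNormedType.Exports.
Local Open Scope classical_set_scope.
Local Open Scope ring_scope.
Set Implicit Arguments. Unset Strict Implicit. Unset Printing Implicit Defensive.

(* Projecting onto a closed convex set C_i is Fejer monotone with respect to
   every point of C_i, and since C_i contains the ball B(a, r), a projection
   step of length d decreases |x_n - a|^2 by at least 2 r d.  Hence the step
   lengths are summable and (x_n) is Cauchy.  For the rate, convexity and the
   common ball give r dist(x, C) <= sup_i dist(x, C_i) |x - a|, so a remote
   step has length at least t_n r dist(x_n, C) / |x_0 - a|; with Fejer
   monotonicity this yields
     dist(x_{n+1}, C)^2 <= (1 - t_n^2 r^2 / |x_0 - a|^2) dist(x_n, C)^2,
   while |x_n - w| <= 2 dist(x_n, C).  If sum t_n^2 diverges, dist(x_n, C)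
   tends to 0 and w lies in the closed set C. *)

Lemma convex_set_comb (R : numDomainType) (M : lmodType R)
  (A : set (convex_lmodType M)) y z l :
  convex_set A -> A y -> A z -> 0 <= l <= 1 -> A (l *: y + (1 - l) *: z).
Proof.
move=> cA Ay Az /andP[l0 l1].
by have := cA y z (Itv01 l0 l1) (mem_set Ay) (mem_set Az); rewrite inE.
Qed.

Lemma convex_ball_segment_mem (R : realType) (H : normedModType R)
  (A : set H) a r x p (D : R) :
  convex_set (A : set (convex_lmodType H)) -> cball a r `<=` A -> 0 <= r ->
  A p -> 0 < D -> `|x - p| <= D ->
  A ((r / (r + D)) *: x + (1 - r / (r + D)) *: a).
Proof.
move=> cA bA r0 Ap D0 xpD; set l := r / (r + D).
have rD : 0 < r + D by rewrite ltr_wpDl.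
have l01 : 0 <= l <= 1.
  by rewrite /l divr_ge0 ?(ltW rD) //= ler_pdivrMr // mul1r lerDl (ltW D0).
have lE : (1 - l) * (r / D) = l by rewrite /l; field; rewrite !gt_eqF.
(* y lies in the ball, and the target point is l p + (1 - l) y *)
have yA : A (a + (r / D) *: (x - p)).
  apply: bA; rewrite /cball /= addrAC subrr add0r normrZ ger0_norm ?divr_ge0 ?(ltW D0) //.
  by rewrite mulrAC ler_pdivrMr // ler_wpM2l.
have := convex_set_comb cA Ap yA l01.
by rewrite scalerDr scalerA lE scalerBr addrCA [l *: p + _]addrC subrK addrC.
Qed.

Lemma ler_mul_of_gt (R : realFieldType) (u v K : R) :
  0 <= K -> (forall v', v < v' -> u <= v' * K) -> u <= v * K.
Proof.
move=> K0 uv; apply/ler_addgt0Pr => e e0.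
have K1 : 0 < K + 1 by rewrite ltr_wpDl.
apply: (le_trans (uv (v + e / (K + 1)) _)); first by rewrite ltrDl divr_gt0.
rewrite mulrDl lerD2l mulrAC ler_pdivrMr // ler_pM2l //; lra.
Qed.

Lemma ler_mul_sqrt (R : rcfType) (u v f : R) :
  0 <= u -> 0 <= v -> u ^+ 2 <= v ^+ 2 * f -> u <= v * Num.sqrt f.
Proof.
move=> u0 v0 /ler_wsqrtr; rewrite sqrtrM ?sqr_ge0 // !sqrtr_sqr.
by rewrite !ger0_norm.
Qed.

Lemma cvgn_of_bounded_variation (R : realType) (V : completeNormedModType R)
  (x : V ^nat) (M : R) :
  (forall n, \sum_(0 <= k < n) `|x k.+1 - x k| <= M) -> cvgn x.
Proof.
move=> xM; pose u k := x k.+1 - x k.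
have : cvgn (series u).
  apply: normed_cvg; apply: nondecreasing_is_cvgn.
    by apply: nondecreasing_series => n _ _; exact: normr_ge0.
  by exists M => _ [n _ <-]; rewrite /normed_series_of seriesEnat; exact: xM.
have -> : series u = (fun n => x n - x 0%N).
  by apply: funext => n; rewrite seriesEnat /= telescope_sumr.
move=> /is_cvgD /(_ (is_cvg_cst (x 0%N))).
suff -> : (fun n => x n - x 0%N) + (fun=> x 0%N) = x by [].
by apply/funext => n /=; rewrite subrK.
Qed.

Section InnerProduct.
Variables (R : realType) (H : normedModType R) (ip : H -> H -> R).
Hypothesis hip : is_inner_product ip.

Let ipC : forall x y, ip x y = ip y x := proj1 hip.
Let ipDl : forall x y z, ip (x + y) z = ip x z + ip y z := proj1 (proj2 hip).
Let ipZl : forall (c : R) x y, ip (c *: x) y = c * ip x y := proj1 (proj2 (proj2 hip)).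
Let ipxx : forall x, `|x| ^+ 2 = ip x x := proj2 (proj2 (proj2 hip)).

Lemma ipDr x y z : ip x (y + z) = ip x y + ip x z.
Proof. by rewrite ipC ipDl -!(ipC x). Qed.

Lemma ipZr (c : R) x y : ip x (c *: y) = c * ip x y.
Proof. by rewrite ipC ipZl ipC. Qed.

Lemma ipNr x y : ip x (- y) = - ip x y.
Proof. by rewrite -scaleN1r ipZr mulN1r. Qed.

Lemma ip0r x : ip x 0 = 0.
Proof. by rewrite -(scale0r (0 : H)) ipZr mul0r. Qed.

Lemma sqr_normD x y : `|x + y| ^+ 2 = `|x| ^+ 2 + 2 * ip x y + `|y| ^+ 2.
Proof. by rewrite !ipxx ipDl !ipDr (ipC y x) mulr2n mulrDl mul1r !addrA. Qed.

Lemma sqr_normB x y : `|x - y| ^+ 2 = `|x| ^+ 2 - 2 * ip x y + `|y| ^+ 2.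
Proof. by rewrite sqr_normD ipNr normrN mulrN. Qed.

Lemma metric_proj_ip_le0 (A : set H) x p y :
  convex_set (A : set (convex_lmodType H)) ->
  is_metric_proj A x p -> A y -> ip (x - p) (y - p) <= 0.
Proof.
move=> cA [Ap pmin] Ay; set v := ip (x - p) (y - p); set N := `|y - p| ^+ 2.
have small_steps s : 0 < s -> s <= 1 -> 2 * v <= s * N.
  move=> s0 s1; have s01 : 0 <= s <= 1 by rewrite ltW.
  have /pmin : A (s *: y + (1 - s) *: p) by exact: convex_set_comb.
  move/(lerXn2r 2 (normr_ge0 _) (normr_ge0 _)).
  have -> : x - (s *: y + (1 - s) *: p) = (x - p) - s *: (y - p).
    rewrite scalerBl scale1r scalerBr opprD !opprB -addrA; congr (_ + _).
    by rewrite addrCA [RHS]addrCA [- p + _]addrC.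
  rewrite [`|x - p - _| ^+ 2]sqr_normB ipZr normrZ (ger0_norm (ltW s0)).
  rewrite exprMn -/v -/N; nra.
rewrite leNgt; apply/negP => v0.
have N0 : 0 <= N by exact: sqr_ge0.
(* letting s -> 0 forces v <= 0; the choice s = v / (v + N) suffices *)
have := small_steps (v / (v + N)) (divr_gt0 v0 (ltr_wpDr N0 v0)).
rewrite ler_pdivrMr ?ltr_wpDr // mul1r lerDl N0 => /(_ isT).
rewrite mulrAC ler_pdivlMr ?ltr_wpDr //; nra.
Qed.

Lemma metric_proj_Fejer (A : set H) x p c :
  convex_set (A : set (convex_lmodType H)) ->
  is_metric_proj A x p -> A c -> `|p - c| ^+ 2 + `|x - p| ^+ 2 <= `|x - c| ^+ 2.
Proof.
move=> cA pp Ac; have := metric_proj_ip_le0 cA pp Ac.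
have -> : x - c = (x - p) + (p - c) by rewrite addrA subrK.
rewrite (sqr_normD (x - p)) -(opprB c p) ipNr; lra.
Qed.

Lemma metric_proj_ball (A : set H) a r x p :
  convex_set (A : set (convex_lmodType H)) -> cball a r `<=` A -> 0 <= r ->
  is_metric_proj A x p -> 2 * r * `|x - p| + `|p - a| ^+ 2 <= `|x - a| ^+ 2.
Proof.
move=> cA bA r0 pp.
have -> : x - a = (x - p) + (p - a) by rewrite addrA subrK.
rewrite (sqr_normD (x - p)).
suff : r * `|x - p| <= ip (x - p) (p - a) by have := sqr_ge0 `|x - p|; lra.
have [->|] := eqVneq (x - p) 0; first by rewrite normr0 mulr0 ipC ip0r.
rewrite -normr_gt0 => d0; set d := `|x - p| in d0 *.
(* test the variational inequality at the point of the ball farthest along x - p *)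
have yA : A (a + (r / d) *: (x - p)).
  apply: bA; rewrite /cball /= addrAC subrr add0r normrZ -/d.
  by rewrite ger0_norm ?divr_ge0 ?(ltW d0) // divfK ?gt_eqF.
have := metric_proj_ip_le0 cA pp yA.
have -> : a + (r / d) *: (x - p) - p = (r / d) *: (x - p) - (p - a).
  by rewrite opprB addrA (addrC a).
rewrite [ip _ (_ - (p - a))]ipDr ipZr ipNr -ipxx -/d.
have : r / d * d ^+ 2 = r * d by rewrite expr2 mulrA divfK ?gt_eqF.
lra.
Qed.

End InnerProduct.

Section DistSet.
Variables (R : realType) (H : normedModType R).

Let has_lbound_dist (A : set H) x : has_lbound [set `|x - y| | y in A].
Proof. by exists 0 => _ [y _ <-]. Qed.

Lemma dist_set_le (A : set H) x y : A y -> dist_set x A <= `|x - y|.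
Proof. by move=> Ay; apply: ge_inf => //; exists y. Qed.

Lemma dist_set_ge (A : set H) x v :
  A !=set0 -> (forall y, A y -> v <= `|x - y|) -> v <= dist_set x A.
Proof.
move=> [z Az] vA; apply: lb_le_inf; first by exists `|x - z|, z.
by move=> _ [y Ay <-]; exact: vA.
Qed.

Lemma dist_set_ge0 (A : set H) x : A !=set0 -> 0 <= dist_set x A.
Proof. by move=> A0; apply: dist_set_ge. Qed.

Lemma dist_set_adherent (A : set H) x e :
  A !=set0 -> 0 < e -> exists2 y, A y & `|x - y| < dist_set x A + e.
Proof.
move=> [z Az] e0.
have [_ [y Ay <-]] := @inf_adherent R [set `|x - y| | y in A] e e0
  (conj (ex_intro _ `|x - z| (ex_intro2 _ _ z Az erefl)) (has_lbound_dist A x)).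
by exists y.
Qed.

Lemma sqr_dist_set_ge (A : set H) x s :
  A !=set0 -> 0 <= s -> (forall y, A y -> s <= `|x - y| ^+ 2) ->
  s <= dist_set x A ^+ 2.
Proof.
move=> A0 s0 sA; rewrite -[s]sqr_sqrtr // lerXn2r ?nnegrE ?sqrtr_ge0 ?dist_set_ge0 //.
apply: dist_set_ge => // y /sA /ler_wsqrtr; by rewrite sqrtr_sqr normr_id.
Qed.

Lemma dist_set_le_sup (Omega : Type) (C : Omega -> set H) a x j :
  (forall i, C i a) ->
  dist_set x (C j) <= sup [set dist_set x (C i) | i in [set: Omega]].
Proof.
move=> aC; apply: ub_le_sup; last by exists j.
by exists `|x - a| => _ [i _ <-]; exact: dist_set_le.
Qed.

Lemma closed_approx (A : set H) x :
  closed A -> (forall e, 0 < e -> exists2 y, A y & `|x - y| < e) -> A x.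
Proof.
move=> clA near_x; apply: clA => B /nbhs_ballP [e e0 eB].
have [y Ay xy] := near_x e e0.
by exists y; split => //; apply: eB; rewrite -ball_normE.
Qed.

End DistSet.

Section CommonBall.
Variables (R : realType) (H : normedModType R) (Omega : Type).
Variables (C : Omega -> set H) (a : H) (r : R).
Hypotheses (convC : forall i, convex_set (C i : set (convex_lmodType H)))
  (ballC : forall i, cball a r `<=` C i) (r0 : 0 < r).

Local Notation Cap := (\bigcap_(i in [set: Omega]) C i).

Lemma center_mem i : C i a.
Proof. by apply: ballC; rewrite /cball /= subrr normr0 ltW. Qed.

Lemma center_mem_bigcap : Cap a.
Proof. by move=> i _; exact: center_mem. Qed.

Lemma dist_bigcap_le (x : H) (D : R) :
  0 < D -> (forall j, dist_set x (C j) < D) -> r * dist_set x Cap <= D * `|x - a|.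
Proof.
move=> D0 xD; set l := r / (r + D).
have rD : 0 < r + D by rewrite addr_gt0.
have lD : 1 - l = D / (r + D) by rewrite /l; field; rewrite gt_eqF.
have capl : Cap (l *: x + (1 - l) *: a).
  move=> j _; have e0 : 0 < D - dist_set x (C j) by rewrite subr_gt0.
  have [p Cjp xp] := dist_set_adherent x (ex_intro _ a (center_mem j)) e0.
  apply: convex_ball_segment_mem (@convC j) (ballC j) (ltW r0) Cjp D0 _.
  by rewrite addrCA subrr addr0 in xp; exact: ltW.
have := dist_set_le x capl.
have -> : x - (l *: x + (1 - l) *: a) = (1 - l) *: (x - a).
  by rewrite scalerBr !scalerBl !scale1r opprD addrA.
rewrite normrZ ger0_norm lD ?divr_ge0 ?(ltW D0) ?(ltW rD) // => dl.
apply: le_trans (ler_wpM2l (ltW r0) dl) _.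
rewrite mulrA ler_wpM2r // mulrA ler_pdivrMr //; nra.
Qed.

Lemma dist_bigcap_le_sup (j0 : Omega) (x : H) :
  r * dist_set x Cap <= sup [set dist_set x (C i) | i in [set: Omega]] * `|x - a|.
Proof.
apply: ler_mul_of_gt => // D supD; apply: dist_bigcap_le => [|j].
  apply: le_lt_trans supD; apply: le_trans (dist_set_le_sup x j0 center_mem).
  by apply: dist_set_ge0; exists a; exact: center_mem.
exact: le_lt_trans (dist_set_le_sup x j center_mem) supD.
Qed.

End CommonBall.

Section RemoteProjections.
Variables (R : realType) (H : normedModType R) (ip : H -> H -> R) (Omega : Type).
Variables (C : Omega -> set H) (a : H) (r : R) (t : nat -> R) (x : nat -> H).
Hypotheses (hip : is_inner_product ip)
  (convC : forall i, convex_set (C i : set (convex_lmodType H)))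
  (ballC : forall i, cball a r `<=` C i) (r0 : 0 < r) (t0 : forall n, 0 <= t n)
  (step : forall n, exists i : Omega,
    t n * sup [set dist_set (x n) (C j) | j in [set: Omega]] <= dist_set (x n) (C i)
    /\ is_metric_proj (C i) (x n) (x n.+1)).

Local Notation Cap := (\bigcap_(i in [set: Omega]) C i).
Local Notation K := `|x 0%N - a|.
Local Notation dl n := (dist_set (x n) Cap).

Let Capa : Cap a := center_mem_bigcap ballC r0.

Let Cap0 : Cap !=set0.
Proof. by exists a. Qed.

Let dl0_le : dl 0%N <= K.
Proof. exact: dist_set_le. Qed.

Lemma remote_proj_Fejer n c :
  Cap c -> `|x n.+1 - c| ^+ 2 + `|x n - x n.+1| ^+ 2 <= `|x n - c| ^+ 2.
Proof.
move=> Cc; have [i [_ pi]] := step n.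
by apply: (metric_proj_Fejer hip (@convC i) pi); exact: Cc.
Qed.

Lemma remote_proj_Fejer_monotone n m c :
  Cap c -> (n <= m)%N -> `|x m - c| <= `|x n - c|.
Proof.
move=> Cc /subnK <-; elim: (m - n)%N => // k IH; rewrite addSn; apply: le_trans IH.
rewrite -ler_sqr ?nnegrE //; apply: le_trans (remote_proj_Fejer _ Cc).
by rewrite lerDl sqr_ge0.
Qed.

Lemma remote_proj_variation n :
  2 * r * \sum_(0 <= k < n) `|x k.+1 - x k| + `|x n - a| ^+ 2 <= K ^+ 2.
Proof.
elim: n => [|n IH]; first by rewrite big_geq // mulr0 add0r.
have [i [_ pi]] := step n.
have := metric_proj_ball hip (@convC i) (ballC i) (ltW r0) pi.
rewrite big_nat_recr //= distrC; lra.
Qed.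

Lemma remote_proj_limn_le n c : cvgn x -> Cap c -> `|limn x - c| <= `|x n - c|.
Proof.
move=> xcvg Cc; rewrite distrC.
apply: (closed_cvg (closed_ball_ Num.norm c `|x n - c|)) xcvg.
  exact: closed_closed_ball_.
near=> m; rewrite /closed_ball_ /= distrC; apply: remote_proj_Fejer_monotone => //.
by near: m; exact: nbhs_infty_ge.
Unshelve. all: by end_near.
Qed.

Lemma remote_proj_limn_dist n : cvgn x -> `|x n - limn x| <= 2 * dl n.
Proof.
move=> xcvg; rewrite -ler_pdivrMl //; apply: dist_set_ge => // c Cc.
have := remote_proj_limn_le n xcvg Cc; have := ler_distD c (x n) (limn x).
rewrite (distrC c); lra.
Qed.

Lemma remote_proj_step_ge n : t n * r * dl n <= `|x n - x n.+1| * K.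
Proof.
have [i [tD [Cxn1 _]]] := step n.
have xnK : `|x n - a| <= K by exact: remote_proj_Fejer_monotone.
rewrite -mulrA (le_trans (ler_wpM2l (t0 n) (dist_bigcap_le_sup convC ballC r0 i _))) //.
rewrite mulrA; apply: le_trans (ler_wpM2r (normr_ge0 _) tD) _.
apply: le_trans (ler_wpM2r (normr_ge0 _) (dist_set_le _ Cxn1)) _.
exact: ler_wpM2l.
Qed.

Lemma remote_proj_dist_step n :
  dl n.+1 ^+ 2 <= dl n ^+ 2 * (1 - t n ^+ 2 * r ^+ 2 / K ^+ 2).
Proof.
have Fejer_dist : dl n.+1 ^+ 2 + `|x n - x n.+1| ^+ 2 <= dl n ^+ 2.
  apply: sqr_dist_set_ge => // [|c Cc]; first by rewrite addr_ge0 ?sqr_ge0.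
  apply: le_trans (remote_proj_Fejer n Cc); rewrite lerD2r.
  by rewrite lerXn2r ?nnegrE ?dist_set_ge0 ?dist_set_le.
suff : t n ^+ 2 * r ^+ 2 / K ^+ 2 * dl n ^+ 2 <= `|x n - x n.+1| ^+ 2.
  by move: Fejer_dist; rewrite mulrBr mulr1 [dl n ^+ 2 * _]mulrC; lra.
have [->|K0] := eqVneq K 0; first by rewrite expr0n invr0 mulr0 mul0r sqr_ge0.
rewrite -normr_gt0 normr_id in K0.
rewrite mulrAC ler_pdivrMr ?exprn_gt0 // -!exprMn.
by rewrite lerXn2r ?nnegrE ?mulr_ge0 ?(ltW r0) ?dist_set_ge0 ?remote_proj_step_ge.
Qed.

Lemma remote_proj_dist_le_prod n :
  dl n <= K * \prod_(k < n) Num.sqrt (1 - t k ^+ 2 * r ^+ 2 / K ^+ 2).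
Proof.
elim: n => [|n IH]; first by rewrite big_ord0 mulr1 dl0_le.
rewrite big_ord_recr /= mulrA.
apply: le_trans (ler_wpM2r (sqrtr_ge0 _) IH).
by apply: ler_mul_sqrt; rewrite ?dist_set_ge0 ?remote_proj_dist_step.
Qed.

Lemma remote_proj_dist_series n :
  dl n ^+ 2 + r ^+ 2 / K ^+ 2 * \sum_(0 <= k < n) (t k * dl k) ^+ 2 <= K ^+ 2.
Proof.
elim: n => [|n IH].
  by rewrite big_geq // mulr0 addr0 lerXn2r ?nnegrE ?dist_set_ge0.
rewrite big_nat_recr //= mulrDr; apply: le_trans IH.
have := remote_proj_dist_step n; rewrite exprMn; lra.
Qed.

Lemma remote_proj_dist_small :
  [series t k ^+ 2]_k @ \oo --> +oo -> forall e, 0 < e -> exists n, dl n < e.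
Proof.
move=> tdiv e e0; apply: contrapT => /forallNP dl_ge.
have {}dl_ge k : e <= dl k by rewrite leNgt; apply/negP/dl_ge.
have K0 : 0 < K := lt_le_trans e0 (le_trans (dl_ge 0%N) dl0_le).
pose c := r ^+ 2 / K ^+ 2 * e ^+ 2.
have c0 : 0 < c by rewrite !mulr_gt0 ?invr_gt0 ?exprn_gt0.
have [N _ /(_ N (leqnn N))] := cvgry_gt tdiv (K ^+ 2 / c).
rewrite /= ltr_pdivrMr // seriesEnat /= mulrC ltNge => /negP; apply.
apply: le_trans (remote_proj_dist_series N); apply: ler_wpDl; first exact: sqr_ge0.
rewrite /c -(mulrA (r ^+ 2 / K ^+ 2)) ler_wpM2l ?mulr_ge0 ?invr_ge0 ?sqr_ge0 ?(ltW r0) //.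
rewrite big_distrr /=.
apply: ler_sum => k _; rewrite exprMn mulrC ler_wpM2l ?sqr_ge0 //.
by rewrite lerXn2r ?nnegrE ?dist_set_ge0 ?(ltW e0).
Qed.

Lemma remote_proj_limn_mem :
  (forall i, closed (C i)) -> cvgn x -> [series t k ^+ 2]_k @ \oo --> +oo ->
  Cap (limn x).
Proof.
move=> clC xcvg tdiv; apply: closed_approx; first exact: closed_bigI.
move=> e e0; have e4 : 0 < e / 4 by rewrite divr_gt0.
have [n dn] := remote_proj_dist_small tdiv e4.
have [c Cc xc] := dist_set_adherent (x n) Cap0 e4.
exists c => //; have := remote_proj_limn_dist n xcvg.
have := ler_distD (x n) (limn x) c; rewrite (distrC (limn x) (x n)); lra.
Qed.

End RemoteProjections.

Theorem mainTheorem6 (R : realType) (H : completeNormedModType R)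
  (ip : H -> H -> R) (Omega : Type) (C : Omega -> set H) (a : H) (r : R)
  (t : nat -> R) (x0 : H) (x : nat -> H) :
  is_inner_product ip ->
  (exists i j : Omega, i <> j) ->
  0 < r ->
  (forall i, closed (C i)) ->
  (forall i, convex_set (C i : set (convex_lmodType H))) ->
  (forall i, cball a r `<=` C i) ->
  (forall n, 0 <= t n <= 1) ->
  ((exists n, t n = 1) ->
     forall y : H, exists i, forall j, dist_set y (C j) <= dist_set y (C i)) ->
  remote_proj_seq C t x0 x ->
  cvgn x /\
  ([series t k ^+ 2]_k @ \oo --> +oo ->
     (\bigcap_(i in [set: Omega]) C i) (limn x) /\
     forall n, `|x n - limn x| <=
        2 * `|x0 - a| *
        \prod_(k < n) Num.sqrt (1 - t k ^+ 2 * r ^+ 2 / `|x0 - a| ^+ 2)).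
Proof.
move=> hip _ r0 clC convC ballC t01 _ [<- step].
have t0 n : 0 <= t n by case/andP: (t01 n).
have xcvg : cvgn x.
  apply: (@cvgn_of_bounded_variation _ _ _ (`|x 0%N - a| ^+ 2 / (2 * r))) => n.
  rewrite ler_pdivlMr ?mulr_gt0 // mulrC.
  have := remote_proj_variation hip convC ballC r0 step n.
  by have := sqr_ge0 `|x n - a|; lra.
split=> // tdiv; split.
  exact: remote_proj_limn_mem hip convC ballC r0 t0 step clC xcvg tdiv.
move=> n; rewrite -mulrA.
apply: le_trans (remote_proj_limn_dist hip convC ballC r0 step n xcvg) _.
by rewrite ler_pM2l // (remote_proj_dist_le_prod hip convC ballC r0 t0 step).
Qed.
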